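(* Let $G,H$ be finite connected simple graphs and $\Delta$ a triangulation of $G\times H$. Then $\beta(\operatorname{Prin}(G)\times\operatorname{Prin}(H))\subseteq\operatorname{Prin}(\Delta)$.
   Context: Triangulated product: $\Delta$ has vertex set $V(G)\times V(H)$; horizontal edges $\{(a,b),(x,b)\}$ ($ax\in E(G)$, $b\in V(H)$); vertical edges $\{(a,b),(a,y)\}$ ($a\in V(G)$, $by\in E(H)$); for each $ax\in E(G)$, $by\in E(H)$ the square $(a,b),(x,b),(x,y),(a,y)$ is split by one chosen diagonal edge into two triangles. For a triangle $\sigma$, $\mathrm{diag}(\sigma)$ is its diagonal edge. $\alpha(e,v)=1$ if $v\in e$, $e$ diagonal; $\alpha(e,v)=|\{\text{triangles }\sigma\supset e: v\notin\mathrm{diag}(\sigma)\}|$ if $v\in e$, $e$ not diagonal; $0$ if $v\notin e$. For $\phi:V(\Delta)\to\mathbb{Z}$, $\operatorname{Div}(\phi)=\sum_{r}\big(\sum_{\sigma\supset r}\phi(\sigma\setminus r)-\sum_{v\in r}\alpha(r,v)\phi(v)\big)[r]$ (sum over edges $r$ and triangles $\sigma$; $\sigma\setminus r$ the opposite vertex); $\operatorname{Prin}(\Delta)$ is the group of all such divisors. $\operatorname{Prin}(G)\subseteq\mathbb{Z}^{V(G)}$ is the column span of the Laplacian $L(G)$ (diagonal entries $-\deg(v_i)$, off-diagonal $1$ for adjacent vertices, $0$ otherwise); similarly for $H$. $\beta(C,D)$, for $C\in\mathbb{Z}^{V(G)}$, $D\in\mathbb{Z}^{V(H)}$, is the divisor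 on $\Delta$ with value $C(a)$ on each vertical edge $\{(a,b),(a,y)\}$, $D(b)$ on each horizontal edge $\{(a,b),(x,b)\}$, and $0$ on diagonal edges. *)

From HB Require Import structures.
From mathcomp Require Import all_boot all_order all_algebra.
Set Implicit Arguments. Unset Strict Implicit. Unset Printing Implicit Defensive.
Import Order.TTheory GRing.Theory Num.Theory.
Local Open Scope ring_scope.

Definition simple_graph (T : finType) (e : rel T) : Prop :=
  symmetric e /\ irreflexive e.

Definition connected_graph (T : finType) (e : rel T) : Prop :=
  forall u v : T, connect e u v.

Definition laplacian (T : finType) (e : rel T) (v w : T) : int :=
  if v == w then - (#|[set u | e v u]|)%:Z else if e v w then 1 else 0.

Definition Prin_graph (T : finType) (e : rel T) (C : T -> int) : Prop :=
  exists f : T -> int, forall v, C v = \sum_(w : T) laplacian e v w * f w.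

Section Triangulated.
Variables (T1 T2 : finType) (e1 : rel T1) (e2 : rel T2).
Local Notation V := (T1 * T2)%type.

(* Choice of diagonal: Dg a x b y is the chosen diagonal of the square
   (a,b),(x,b),(x,y),(a,y) for ax in E(G), by in E(H). *)
Variable Dg : T1 -> T1 -> T2 -> T2 -> {set V}.

Definition triangulation : Prop :=
  forall a x b y, e1 a x -> e2 b y ->
    [/\ (Dg a x b y == [set (a, b); (x, y)]) || (Dg a x b y == [set (a, y); (x, b)]),
        Dg x a b y = Dg a x b y & Dg a x y b = Dg a x b y].

Definition corners a x b y : {set V} := [set (a, b); (x, b); (x, y); (a, y)].

Definition horiz_edge (r : {set V}) : bool :=
  [exists a, exists x, exists b, e1 a x && (r == [set (a, b); (x, b)])].
Definition vert_edge (r : {set V}) : bool :=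
  [exists a, exists b, exists y, e2 b y && (r == [set (a, b); (a, y)])].
Definition diag_edge (r : {set V}) : bool :=
  [exists a, exists x, exists b, exists y,
     [&& e1 a x, e2 b y & r == Dg a x b y]].
Definition edgeD (r : {set V}) : bool :=
  [|| horiz_edge r, vert_edge r | diag_edge r].

Definition tri_of a x b y (s : {set V}) : bool :=
  [&& e1 a x, e2 b y &
      [exists c in corners a x b y, (c \notin Dg a x b y) && (s == c |: Dg a x b y)]].

Definition triangles : {set {set V}} :=
  [set s | [exists a, exists x, exists b, exists y, tri_of a x b y s]].

Definition not_in_diag (s : {set V}) (v : V) : bool :=
  [forall a, forall x, forall b, forall y, tri_of a x b y s ==> (v \notin Dg a x b y)].

Definition alpha (r : {set V}) (v : V) : nat :=
  if v \notin r then 0%N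
  else if diag_edge r then 1%N
  else #|[set s in triangles | (r \subset s) && not_in_diag s v]|.

Definition Div (phi : V -> int) (r : {set V}) : int :=
  \sum_(s in triangles | r \subset s) \sum_(w in s :\: r) phi w
  - \sum_(v in r) (alpha r v)%:Z * phi v.

(* beta(C,D): C(a) on vertical edges {(a,b),(a,y)}, D(b) on horizontal
   edges {(a,b),(x,b)}, 0 on diagonal edges. *)
Definition beta (C : T1 -> int) (D : T2 -> int) (r : {set V}) : int :=
  match [pick p : T1 * T2 * T2 | e2 p.1.2 p.2 && (r == [set (p.1.1, p.1.2); (p.1.1, p.2)])] with
  | Some p => C p.1.1
  | None =>
    match [pick p : T1 * T1 * T2 | e1 p.1.1 p.1.2 && (r == [set (p.1.1, p.2); (p.1.2, p.2)])] with
    | Some p => D p.2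
    | None => 0
    end
  end.

Definition Prin_tri (B : {set V} -> int) : Prop :=
  exists phi : V -> int, forall r, edgeD r -> B r = Div phi r.

End Triangulated.

From HB Require Import structures.
From mathcomp Require Import all_boot all_order all_algebra.
From mathcomp Require Import ring.
Set Implicit Arguments. Unset Strict Implicit. Unset Printing Implicit Defensive.
Import Order.TTheory GRing.Theory Num.Theory.
Local Open Scope ring_scope.

(* Write C = L(G) f and D = L(H) g and take the potential phi (a, b) = f a + g b.
   A vertical edge {(a,b),(a,y)} lies in exactly one triangle of each square
   (a,x,b,y) with x a neighbour of a; that triangle contributes f x - f a to
   Div phi, the g-terms cancelling, so the edge receives (L(G) f)(a) = C a.
   Horizontal edges are symmetric.  A diagonal lies in the two triangles of its
   square, whose opposite vertices are the two off-diagonal corners; the four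
   corner values cancel, giving 0 = beta on diagonals. *)

Ltac set_eq_dec := let z := fresh "z" in
  apply/setP => z; rewrite !inE /=; apply/idP/idP;
  repeat match goal with |- is_true (_ || _) -> _ => case/orP end;
  move/eqP->; by rewrite /= ?eqxx ?orbT ?orTb.

Lemma set2_eq (T : finType) (p q u w : T) :
  [set p; q] = [set u; w] -> p != q -> (p = u /\ q = w) \/ (p = w /\ q = u).
Proof.
move=> E npq.
have hp : p \in [set u; w] by rewrite -E !inE eqxx.
have hq : q \in [set u; w] by rewrite -E !inE eqxx orbT.
move: hp hq npq; rewrite !inE => /orP[]/eqP-> /orP[]/eqP->; rewrite ?eqxx //= => _; by auto.
Qed.

Lemma setU1_diff (T : finType) (m : T) (A : {set T}) : m \notin A -> (m |: A) :\: A = [set m].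
Proof.
move=> mA; apply/setP => z; rewrite !inE.
by case: (eqVneq z m) => [->|nz]; rewrite ?(negbTE mA) //=; case: (z \in A).
Qed.

Lemma setU1_eq_setU (T : finType) (c z : T) (A r s : {set T}) : s = c |: A -> r \subset s ->
  z \in r -> z \notin A -> s = r :|: A.
Proof.
move=> Hs Hr zr zA.
have zc : z = c by move: (subsetP Hr z zr); rewrite Hs in_setU1 (negbTE zA) orbF => /eqP.
apply/setP => w; rewrite Hs in_setU1 in_setU; apply/idP/idP.
  by case/orP => [/eqP->|->]; rewrite ?orbT // -zc zr.
case/orP => [wr|->]; last by rewrite orbT.
by move: (subsetP Hr w wr); rewrite Hs in_setU1.
Qed.

Section Cross.
Variables T1 T2 : finType.
Local Notation V := (T1 * T2)%type.

(* [u] and [w] are opposite corners of a square, i.e. span a diagonal. *)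
Definition cross (u w : V) := (u.1 != w.1) && (u.2 != w.2).

Lemma crossC (u w : V) : cross u w = cross w u.
Proof. by rewrite /cross (eq_sym u.1) (eq_sym u.2). Qed.

Lemma crossP (d1 d2 : V) : cross d1 d2 ->
  [/\ (d1.1, d2.2) \notin [set d1; d2], (d2.1, d1.2) \notin [set d1; d2],
      (d1.1, d2.2) != (d2.1, d1.2) & d1 != d2].
Proof.
case: d1 => [p q]; case: d2 => [p' q'] /andP [/= n1 n2].
have n1' := n1; have n2' := n2; rewrite eq_sym in n1'; rewrite eq_sym in n2'.
by rewrite !inE !xpair_eqE /= !eqxx ?(negbTE n1) ?(negbTE n2) ?(negbTE n1') ?(negbTE n2') ?andbF.
Qed.

Lemma cross_pair_uniq (d1 d2 c u w : V) : cross d1 d2 ->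
  c \in [set (d1.1, d2.2); (d2.1, d1.2)] ->
  u \in c |: [set d1; d2] -> w \in c |: [set d1; d2] -> cross u w ->
  [set u; w] = [set d1; d2].
Proof.
case: d1 => [p q]; case: d2 => [p' q'] /andP [/= n1 n2].
rewrite !inE => /orP[]/eqP-> /orP[/eqP->|/orP[]/eqP->] /orP[/eqP->|/orP[]/eqP->];
 rewrite /cross /= ?eqxx ?andbF ?andFb //= => _; set_eq_dec.
Qed.

End Cross.

Section Triangulation.
Variables (T1 T2 : finType) (e1 : rel T1) (e2 : rel T2).
Variable Dg : T1 -> T1 -> T2 -> T2 -> {set (T1 * T2)}.
Hypotheses (sym1 : symmetric e1) (irr1 : irreflexive e1).
Hypotheses (sym2 : symmetric e2) (irr2 : irreflexive e2).
Hypothesis tri : triangulation e1 e2 Dg.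
Local Notation V := (T1 * T2)%type.

Lemma e1_neq a x : e1 a x -> (a == x) = false.
Proof. by apply: contraTF => /eqP->; rewrite irr1. Qed.
Lemma e2_neq b y : e2 b y -> (b == y) = false.
Proof. by apply: contraTF => /eqP->; rewrite irr2. Qed.

Lemma DgP a x b y : e1 a x -> e2 b y ->
  Dg a x b y = [set (a,b); (x,y)] \/ Dg a x b y = [set (a,y); (x,b)].
Proof. by move=> h1 h2; case: (tri h1 h2) => /orP[]/eqP->; auto. Qed.

Lemma Dg_sym a x b y : e1 a x -> e2 b y ->
  [/\ Dg x a b y = Dg a x b y, Dg a x y b = Dg a x b y & Dg x a y b = Dg a x b y].
Proof.
move=> h1 h2; have [_ E1 E2] := tri h1 h2.
have h1' : e1 x a by rewrite sym1.
have [_ _ E3] := tri h1' h2.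
by split => //; rewrite E3 E1.
Qed.

Lemma Dg_cross a x b y : e1 a x -> e2 b y ->
  exists d1 d2, Dg a x b y = [set d1; d2] /\ cross d1 d2.
Proof.
move=> h1 h2; case: (DgP h1 h2) => ->.
  by exists (a,b), (x,y); rewrite /cross /= e1_neq // e2_neq.
by exists (a,y), (x,b); rewrite /cross /= e1_neq // eq_sym e2_neq.
Qed.

Lemma corners_Dg a x b y d1 d2 : e1 a x -> e2 b y ->
  Dg a x b y = [set d1; d2] ->
  corners a x b y = [set d1; d2; (d1.1, d2.2); (d2.1, d1.2)].
Proof.
move=> h1 h2; rewrite /corners.
case: (DgP h1 h2) => -> /set2_eq.
  rewrite xpair_eqE e1_neq // => /(_ isT) [[<- <-]|[<- <-]]; set_eq_dec.
rewrite xpair_eqE e1_neq // => /(_ isT) [[<- <-]|[<- <-]]; set_eq_dec.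
Qed.

Lemma tri_ofP a x b y s : tri_of e1 e2 Dg a x b y s ->
  [/\ e1 a x, e2 b y & exists d1 d2 c, [/\ Dg a x b y = [set d1; d2], cross d1 d2,
     c \in [set (d1.1, d2.2); (d2.1, d1.2)] & s = c |: [set d1; d2]]].
Proof.
case/and3P => h1 h2 /existsP [c /andP [cc /andP [cnD /eqP ->]]].
split => //; case: (Dg_cross h1 h2) => d1 [d2 [HD Hc]].
exists d1, d2, c; split => //; last by rewrite HD.
move: cc cnD; rewrite (corners_Dg h1 h2 HD) HD !inE.
by case: (c == d1); case: (c == d2).
Qed.

Lemma tri_of_cross a x b y d1 d2 c : e1 a x -> e2 b y -> Dg a x b y = [set d1; d2] ->
  cross d1 d2 -> c \in [set (d1.1, d2.2); (d2.1, d1.2)] ->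
  tri_of e1 e2 Dg a x b y (c |: [set d1; d2]).
Proof.
move=> h1 h2 HD cr hc; apply/and3P; split => //; apply/existsP; exists c.
rewrite (corners_Dg h1 h2 HD) HD eqxx andbT.
move: cr hc {HD}; case: d1 => [p q]; case: d2 => [p' q'] /andP [/= n1 n2].
have n1' := n1; have n2' := n2; rewrite eq_sym in n1'; rewrite eq_sym in n2'.
rewrite !inE => /orP[]/eqP->; rewrite ?inE !xpair_eqE /= !eqxx
  ?(negbTE n1) ?(negbTE n2) ?(negbTE n1') ?(negbTE n2') /= ?orbT ?andbF //.
Qed.

Lemma tri_of_Dg_uniq a x b y a' x' b' y' s :
  tri_of e1 e2 Dg a x b y s -> tri_of e1 e2 Dg a' x' b' y' s ->
  Dg a' x' b' y' = Dg a x b y.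
Proof.
case/tri_ofP => _ _ [d1 [d2 [c [HD cr hc Hs]]]].
case/tri_ofP => _ _ [d1' [d2' [c' [HD' cr' hc' Hs']]]].
rewrite HD HD' -(cross_pair_uniq cr hc _ _ cr') //.
  by rewrite -Hs Hs' !inE eqxx !orbT.
by rewrite -Hs Hs' !inE eqxx !orbT.
Qed.

Lemma not_in_diag_tri a x b y s v : tri_of e1 e2 Dg a x b y s ->
  not_in_diag e1 e2 Dg s v = (v \notin Dg a x b y).
Proof.
move=> H; apply/idP/idP.
  by move/forallP/(_ a)/forallP/(_ x)/forallP/(_ b)/forallP/(_ y)/implyP/(_ H).
move=> nv; apply/forallP => a'; apply/forallP => x'; apply/forallP => b';
  apply/forallP => y'; apply/implyP => H'.
by rewrite (tri_of_Dg_uniq H H').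
Qed.

Lemma tri_of_sub_corners a x b y s : tri_of e1 e2 Dg a x b y s -> s \subset corners a x b y.
Proof.
case/and3P => h1 h2 /existsP[c /andP[cc /andP[_ /eqP->]]].
apply/subsetP => z; rewrite in_setU1 => /orP[/eqP->//|].
by case: (DgP h1 h2) => ->; rewrite /corners !inE => /orP[]/eqP->; rewrite !eqxx ?orbT.
Qed.

Lemma vert_side_Dg a' x' b' y' a b y : e1 a' x' -> e2 b' y' ->
  (a,b) \in corners a' x' b' y' -> (a,y) \in corners a' x' b' y' -> b != y ->
  exists x, e1 a x /\ Dg a x b y = Dg a' x' b' y'.
Proof.
move=> h1 h2; case: (Dg_sym h1 h2) => E1 E2 E3.
rewrite /corners !inE !xpair_eqE -!orbA => /or4P [] /andP [/eqP ? /eqP ?]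
  /or4P [] /andP [/eqP ? /eqP ?]; subst => nby;
  try (by rewrite eqxx in nby); try (by rewrite irr1 in h1); try (by rewrite irr2 in h2);
  (eexists; split; [first [eassumption | rewrite sym1; eassumption] |
    by rewrite ?E1 ?E2 ?E3]).
Qed.

Lemma horiz_side_Dg a' x' b' y' a x b : e1 a' x' -> e2 b' y' ->
  (a,b) \in corners a' x' b' y' -> (x,b) \in corners a' x' b' y' -> a != x ->
  exists y, e2 b y /\ Dg a x b y = Dg a' x' b' y'.
Proof.
move=> h1 h2; case: (Dg_sym h1 h2) => E1 E2 E3.
rewrite /corners !inE !xpair_eqE -!orbA => /or4P [] /andP [/eqP ? /eqP ?]
  /or4P [] /andP [/eqP ? /eqP ?]; subst => nby;
  try (by rewrite eqxx in nby); try (by rewrite irr1 in h1); try (by rewrite irr2 in h2);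
  (eexists; split; [first [eassumption | rewrite sym2; eassumption] |
    by rewrite ?E1 ?E2 ?E3]).
Qed.

Lemma tri_of_vert a x b y : e1 a x -> e2 b y ->
  tri_of e1 e2 Dg a x b y ([set (a,b); (a,y)] :|: Dg a x b y).
Proof.
move=> h1 h2; have F1 := e1_neq h1; have F2 := e2_neq h2.
have F2' : (y == b) = false by rewrite eq_sym.
case: (DgP h1 h2) => HD; rewrite HD.
  have -> : [set (a,b); (a,y)] :|: [set (a, b); (x, y)] = (a,y) |: [set (a, b); (x, y)] by set_eq_dec.
  by apply: tri_of_cross HD _ _; rewrite /cross /= ?F1 ?F2 // !inE eqxx.
have -> : [set (a,b); (a,y)] :|: [set (a, y); (x, b)] = (a,b) |: [set (a, y); (x, b)] by set_eq_dec.
by apply: tri_of_cross HD _ _; rewrite /cross /= ?F1 ?F2' // !inE eqxx.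
Qed.

Lemma tri_of_horiz a x b y : e1 a x -> e2 b y ->
  tri_of e1 e2 Dg a x b y ([set (a,b); (x,b)] :|: Dg a x b y).
Proof.
move=> h1 h2; have F1 := e1_neq h1; have F2 := e2_neq h2.
have F2' : (y == b) = false by rewrite eq_sym.
case: (DgP h1 h2) => HD; rewrite HD.
  have -> : [set (a,b); (x,b)] :|: [set (a, b); (x, y)] = (x,b) |: [set (a, b); (x, y)] by set_eq_dec.
  by apply: tri_of_cross HD _ _; rewrite /cross /= ?F1 ?F2 // !inE eqxx ?orbT.
have -> : [set (a,b); (x,b)] :|: [set (a, y); (x, b)] = (a,b) |: [set (a, y); (x, b)] by set_eq_dec.
by apply: tri_of_cross HD _ _; rewrite /cross /= ?F1 ?F2' // !inE eqxx ?orbT.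
Qed.

Lemma triangles_on_vert a b y : e2 b y ->
  [set s in triangles e1 e2 Dg | [set (a,b); (a,y)] \subset s] =
  [set [set (a,b); (a,y)] :|: Dg a x b y | x in [set x | e1 a x]].
Proof.
move=> hby; have F2 := e2_neq hby; have F2' : (y == b) = false by rewrite eq_sym.
apply/setP => s; rewrite !inE; apply/idP/idP.
  case/andP => /existsP[a' /existsP[x' /existsP[b' /existsP[y' H]]]] Hsub.
  have Hc := subset_trans Hsub (tri_of_sub_corners H).
  case/and3P: (H) => h1 h2 /existsP[c /andP[_ /andP[cn /eqP Hs]]].
  have [x [hx HD]] := vert_side_Dg h1 h2 (subsetP Hc (a,b) ltac:(by rewrite !inE eqxx))
     (subsetP Hc (a,y) ltac:(by rewrite !inE eqxx orbT)) (negbT F2).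
  apply/imsetP; exists x; first by rewrite inE.
  rewrite -HD in Hs cn; have F1 := e1_neq hx.
  case: (DgP hx hby) => HD'.
    by apply: (setU1_eq_setU Hs Hsub (_ : (a,y) \in _)); rewrite ?HD' !inE ?xpair_eqE ?eqxx ?orbT //= F1 F2'.
  by apply: (setU1_eq_setU Hs Hsub (_ : (a,b) \in _)); rewrite ?HD' !inE ?xpair_eqE ?eqxx ?orbT //= F1 F2.
case/imsetP => x; rewrite inE => hx ->; rewrite subsetUl andbT.
by apply/existsP; exists a; apply/existsP; exists x; apply/existsP; exists b;
  apply/existsP; exists y; apply: tri_of_vert.
Qed.

Lemma triangles_on_horiz a x b : e1 a x ->
  [set s in triangles e1 e2 Dg | [set (a,b); (x,b)] \subset s] =
  [set [set (a,b); (x,b)] :|: Dg a x b y | y in [set y | e2 b y]].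
Proof.
move=> hax; have F1 := e1_neq hax; have F1' : (x == a) = false by rewrite eq_sym.
apply/setP => s; rewrite !inE; apply/idP/idP.
  case/andP => /existsP[a' /existsP[x' /existsP[b' /existsP[y' H]]]] Hsub.
  have Hc := subset_trans Hsub (tri_of_sub_corners H).
  case/and3P: (H) => h1 h2 /existsP[c /andP[_ /andP[cn /eqP Hs]]].
  have [y [hy HD]] := horiz_side_Dg h1 h2 (subsetP Hc (a,b) ltac:(by rewrite !inE eqxx))
     (subsetP Hc (x,b) ltac:(by rewrite !inE eqxx orbT)) (negbT F1).
  apply/imsetP; exists y; first by rewrite inE.
  rewrite -HD in Hs cn; have F2 := e2_neq hy.
  case: (DgP hax hy) => HD'.
    by apply: (setU1_eq_setU Hs Hsub (_ : (x,b) \in _)); rewrite ?HD' !inE ?xpair_eqE ?eqxx ?orbT //= F1' F2.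
  by apply: (setU1_eq_setU Hs Hsub (_ : (a,b) \in _)); rewrite ?HD' !inE ?xpair_eqE ?eqxx ?orbT //= F1 F2.
case/imsetP => y; rewrite inE => hy ->; rewrite subsetUl andbT.
by apply/existsP; exists a; apply/existsP; exists x; apply/existsP; exists b;
  apply/existsP; exists y; apply: tri_of_horiz.
Qed.

Lemma vert_inj a b y : e2 b y ->
  {in [set x | e1 a x] &, injective (fun x => [set (a,b); (a,y)] :|: Dg a x b y)}.
Proof.
move=> hby x1 x2; rewrite !inE => h1 h2 E.
have F1 : (x1 == a) = false by rewrite eq_sym e1_neq.
have [q hq] : exists q, (x1, q) \in Dg a x1 b y.
  by case: (DgP h1 hby) => ->; [exists y | exists b]; rewrite !inE eqxx orbT.
have : (x1, q) \in [set (a,b); (a,y)] :|: Dg a x2 b y by rewrite -E in_setU hq orbT.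
by case: (DgP h2 hby) => ->; rewrite !inE !xpair_eqE F1 /= => /andP[/eqP].
Qed.

Lemma horiz_inj a x b : e1 a x ->
  {in [set y | e2 b y] &, injective (fun y => [set (a,b); (x,b)] :|: Dg a x b y)}.
Proof.
move=> hax y1 y2; rewrite !inE => h1 h2 E.
have F2 : (y1 == b) = false by rewrite eq_sym e2_neq.
have [q hq] : exists q, (q, y1) \in Dg a x b y1.
  by case: (DgP hax h1) => ->; [exists x | exists a]; rewrite !inE eqxx ?orbT.
have : (q, y1) \in [set (a,b); (x,b)] :|: Dg a x b y2 by rewrite -E in_setU hq orbT.
by case: (DgP hax h2) => ->; rewrite !inE !xpair_eqE F2 /= ?andbF ?orbF /= => /andP[_ /eqP].
Qed.

(* The share of triangle [s] in [Div phi r] when [alpha r v] counts triangles,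
   i.e. when [r] is not a diagonal (see [Div_nondiag]). *)
Definition tri_contrib (phi : V -> int) (r s : {set V}) : int :=
  \sum_(w in s :\: r) phi w - \sum_(v in r) (not_in_diag e1 e2 Dg s v)%:Z * phi v.

Lemma vert_tri_contrib (f : T1 -> int) (g : T2 -> int) a x b y : e1 a x -> e2 b y ->
  tri_contrib (fun w => f w.1 + g w.2) [set (a,b); (a,y)] ([set (a,b); (a,y)] :|: Dg a x b y)
  = f x - f a.
Proof.
rewrite /tri_contrib => h1 h2; have Ht := tri_of_vert h1 h2.
have F1 := e1_neq h1; have F2 := e2_neq h2.
have F1' : (x == a) = false by rewrite eq_sym.
have F2' : (y == b) = false by rewrite eq_sym.
under [X in _ - X]eq_bigr => v _ do rewrite (not_in_diag_tri v Ht).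
have nab : (a,b) \notin [set (a,y)] by rewrite !inE xpair_eqE F2 andbF.
case: (DgP h1 h2) => HD; rewrite HD.
  have -> : ([set (a,b); (a,y)] :|: [set (a,b); (x,y)]) :\: [set (a,b); (a,y)] = [set (x,y)].
    apply/setP => z; rewrite !inE; case: (eqVneq z (x,y)) => [->|nz].
      by rewrite !xpair_eqE ?eqxx F1' F2' /= ?andbF.
    by case: (z == (a,b)); case: (z == (a,y)).
  rewrite big_set1 big_setU1 // big_set1 /= !inE !xpair_eqE !eqxx F1 F2 F2' /=; ring.
have -> : ([set (a,b); (a,y)] :|: [set (a,y); (x,b)]) :\: [set (a,b); (a,y)] = [set (x,b)].
  apply/setP => z; rewrite !inE; case: (eqVneq z (x,b)) => [->|nz].
    by rewrite !xpair_eqE ?eqxx F1' F2 /= ?andbF.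
  by case: (z == (a,b)); case: (z == (a,y)).
rewrite big_set1 big_setU1 // big_set1 /= !inE !xpair_eqE !eqxx F1 F2 F2' /=; ring.
Qed.

Lemma horiz_tri_contrib (f : T1 -> int) (g : T2 -> int) a x b y : e1 a x -> e2 b y ->
  tri_contrib (fun w => f w.1 + g w.2) [set (a,b); (x,b)] ([set (a,b); (x,b)] :|: Dg a x b y)
  = g y - g b.
Proof.
rewrite /tri_contrib => h1 h2; have Ht := tri_of_horiz h1 h2.
have F1 := e1_neq h1; have F2 := e2_neq h2.
have F1' : (x == a) = false by rewrite eq_sym.
have F2' : (y == b) = false by rewrite eq_sym.
under [X in _ - X]eq_bigr => v _ do rewrite (not_in_diag_tri v Ht).
have nab : (a,b) \notin [set (x,b)] by rewrite !inE xpair_eqE F1.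
case: (DgP h1 h2) => HD; rewrite HD.
  have -> : ([set (a,b); (x,b)] :|: [set (a,b); (x,y)]) :\: [set (a,b); (x,b)] = [set (x,y)].
    apply/setP => z; rewrite !inE; case: (eqVneq z (x,y)) => [->|nz].
      by rewrite !xpair_eqE ?eqxx F1' F2' /= ?andbF.
    by case: (z == (a,b)); case: (z == (x,b)).
  rewrite big_set1 big_setU1 // big_set1 /= !inE !xpair_eqE !eqxx F1 F1' F2 /=; ring.
have -> : ([set (a,b); (x,b)] :|: [set (a,y); (x,b)]) :\: [set (a,b); (x,b)] = [set (a,y)].
  apply/setP => z; rewrite !inE; case: (eqVneq z (a,y)) => [->|nz].
    by rewrite !xpair_eqE ?eqxx F1 F2' /= ?andbF.
  by case: (z == (a,b)); case: (z == (x,b)).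
rewrite big_set1 big_setU1 // big_set1 /= !inE !xpair_eqE !eqxx F1 F1' F2 /=; ring.
Qed.

Lemma axis_edge_nondiag (u w : V) : u != w -> ~~ cross u w -> ~~ diag_edge e1 e2 Dg [set u; w].
Proof.
move=> uw nc; apply/negP => /existsP[a /existsP[x /existsP[b /existsP[y /and3P[h1 h2 /eqP E]]]]].
have [d1 [d2 [HD cr]]] := Dg_cross h1 h2; rewrite HD in E.
by case: (set2_eq E uw) => [[? ?]|[? ?]]; subst; [rewrite cr in nc | rewrite crossC cr in nc].
Qed.

Lemma Div_nondiag (phi : V -> int) r : ~~ diag_edge e1 e2 Dg r ->
  Div e1 e2 Dg phi r = \sum_(s in triangles e1 e2 Dg | r \subset s) tri_contrib phi r s.
Proof.
move=> nd; rewrite /Div /tri_contrib sumrB; congr (_ - _).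
rewrite exchange_big /=; apply: eq_bigr => v vr.
rewrite /alpha vr /= (negbTE nd) -mulr_suml; congr (_ * _).
rewrite -sum1_card -natz natr_sum [LHS]big_mkcond [RHS]big_mkcond; apply: eq_bigr => s _.
rewrite !inE.
by case: (r \subset s); case: (not_in_diag e1 e2 Dg s v); rewrite /= ?andbT ?andbF //; case: ifP.
Qed.

Lemma Div_vert (f : T1 -> int) (g : T2 -> int) a b y : e2 b y ->
  Div e1 e2 Dg (fun w => f w.1 + g w.2) [set (a,b); (a,y)] =
  \sum_(x in [set x | e1 a x]) (f x - f a).
Proof.
move=> hby; rewrite Div_nondiag; last first.
  by apply: axis_edge_nondiag; rewrite ?xpair_eqE /cross /= eqxx ?e2_neq.
rewrite (eq_bigl (fun s => s \in [set s in triangles e1 e2 Dg | [set (a,b); (a,y)] \subset s]));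
  last by move=> s; rewrite inE.
rewrite triangles_on_vert // big_imset /=; last exact: vert_inj.
by apply: eq_bigr => x; rewrite inE => hx; rewrite vert_tri_contrib.
Qed.

Lemma Div_horiz (f : T1 -> int) (g : T2 -> int) a x b : e1 a x ->
  Div e1 e2 Dg (fun w => f w.1 + g w.2) [set (a,b); (x,b)] =
  \sum_(y in [set y | e2 b y]) (g y - g b).
Proof.
move=> hax; rewrite Div_nondiag; last first.
  by apply: axis_edge_nondiag; rewrite ?xpair_eqE /cross /= eqxx ?e1_neq ?andbF.
rewrite (eq_bigl (fun s => s \in [set s in triangles e1 e2 Dg | [set (a,b); (x,b)] \subset s]));
  last by move=> s; rewrite inE.
rewrite triangles_on_horiz // big_imset /=; last exact: horiz_inj.
by apply: eq_bigr => y; rewrite inE => hy; rewrite horiz_tri_contrib.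
Qed.


Lemma triangles_on_diag a x b y d1 d2 : e1 a x -> e2 b y -> Dg a x b y = [set d1; d2] -> cross d1 d2 ->
  [set s in triangles e1 e2 Dg | [set d1; d2] \subset s] =
  [set (d1.1, d2.2) |: [set d1; d2]; (d2.1, d1.2) |: [set d1; d2]].
Proof.
move=> h1 h2 HD cr; case: (crossP cr) => _ _ _ d12.
apply/setP => s; rewrite !inE; apply/idP/idP.
  case/andP => /existsP[a' /existsP[x' /existsP[b' /existsP[y' H]]]] Hsub.
  case/tri_ofP: H => h1' h2' [d1' [d2' [c [HD' cr' hc' Hs]]]].
  have m1 : d1 \in c |: [set d1'; d2'] by rewrite -Hs (subsetP Hsub) // !inE eqxx.
  have m2 : d2 \in c |: [set d1'; d2'] by rewrite -Hs (subsetP Hsub) // !inE eqxx orbT.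
  have E := cross_pair_uniq cr' hc' m1 m2 cr.
  rewrite Hs -E; move: hc'.
  case: (set2_eq E d12) => [[<- <-]|[<- <-]]; rewrite !inE => /orP[]/eqP->;
    by rewrite eqxx ?orbT.
case/orP => /eqP->; rewrite subsetUr andbT;
  apply/existsP; exists a; apply/existsP; exists x; apply/existsP; exists b;
  apply/existsP; exists y; apply: tri_of_cross h1 h2 HD cr _; by rewrite !inE eqxx ?orbT.
Qed.

Lemma Div_diag (f : T1 -> int) (g : T2 -> int) a x b y : e1 a x -> e2 b y ->
  Div e1 e2 Dg (fun w => f w.1 + g w.2) (Dg a x b y) = 0.
Proof.
move=> h1 h2; have [d1 [d2 [HD cr]]] := Dg_cross h1 h2.
have dg : diag_edge e1 e2 Dg (Dg a x b y).
  by apply/existsP; exists a; apply/existsP; exists x; apply/existsP; exists b;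
    apply/existsP; exists y; rewrite h1 h2 eqxx.
rewrite /Div.
have -> : \sum_(v in Dg a x b y) (alpha e1 e2 Dg (Dg a x b y) v)%:Z * (f v.1 + g v.2)
    = \sum_(v in Dg a x b y) (f v.1 + g v.2).
  by apply: eq_bigr => v vr; rewrite /alpha vr /= dg mul1r.
rewrite HD (eq_bigl (fun s => s \in [set s in triangles e1 e2 Dg | [set d1; d2] \subset s]));
  last by move=> s; rewrite inE.
rewrite (triangles_on_diag h1 h2 HD cr).
case: (crossP cr) => n1 n2 n12 d12.
rewrite big_setU1 ?big_set1; last first.
  rewrite inE; apply: contra n12 => /eqP E.
  have : (d1.1, d2.2) \in (d2.1, d1.2) |: [set d1; d2] by rewrite -E setU11.
  by rewrite in_setU1 (negbTE n1) orbF.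
rewrite !setU1_diff // !big_set1 big_setU1 ?big_set1 /=; last by rewrite inE.
ring.
Qed.

End Triangulation.

Lemma laplacian_sum (T : finType) (e : rel T) (irr : irreflexive e) (f : T -> int) a :
  \sum_w laplacian e a w * f w = \sum_(x in [set x | e a x]) (f x - f a).
Proof.
rewrite sumrB sumr_const (bigD1 a) //= {1}/laplacian eqxx.
have -> : \sum_(w | w != a) laplacian e a w * f w = \sum_(x in [set x | e a x]) f x.
  rewrite [RHS]big_mkcond [RHS](bigD1 a) //= in_set irr add0r; apply: eq_bigr => w wa.
  rewrite inE /laplacian eq_sym (negbTE wa).
  by case: (e a w); rewrite ?mul1r ?mul0r.
by rewrite addrC mulNr -mulr_natl natz.
Qed.

Section Beta.
Variables (T1 T2 : finType) (e1 : rel T1) (e2 : rel T2) (C : T1 -> int) (D : T2 -> int).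

Lemma beta_vert a b y :
  e2 b y -> b != y -> beta e1 e2 C D [set (a,b); (a,y)] = C a.
Proof.
move=> hby nby; rewrite /beta; case: pickP => [p /andP[_ /eqP E]|H].
  have nab : (a,b) != (a,y) by rewrite xpair_eqE eqxx.
  by case: (set2_eq E nab) => [[E1 _]|[E1 _]]; case: E1 => ->.
by move: (H (a,b,y)); rewrite /= hby eqxx.
Qed.

Lemma beta_horiz a x b :
  e1 a x -> a != x -> beta e1 e2 C D [set (a,b); (x,b)] = D b.
Proof.
move=> hax nax; have nab : (a,b) != (x,b) by rewrite xpair_eqE eqxx andbT.
rewrite /beta; case: pickP => [p /andP[_ /eqP E]|_].
  case: (set2_eq E nab) => [[E1 E2]|[E1 E2]]; case: E1 => Ea _; case: E2 => Ex _;
  by rewrite Ea Ex eqxx in nax.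
case: pickP => [p /andP[_ /eqP E]|H].
  by case: (set2_eq E nab) => [[E1 _]|[E1 _]]; case: E1 => _ ->.
by move: (H (a,x,b)); rewrite /= hax eqxx.
Qed.

Lemma beta_diag (d1 d2 : T1 * T2) : cross d1 d2 -> beta e1 e2 C D [set d1; d2] = 0.
Proof.
move=> cr; have d12 : d1 != d2 by case: (crossP cr).
rewrite /beta; case: pickP => [p /andP[_ /eqP E]|_].
  by case: (set2_eq E d12) => [[? ?]|[? ?]]; subst; rewrite /cross /= eqxx in cr.
case: pickP => [p /andP[_ /eqP E]|_] //.
by case: (set2_eq E d12) => [[? ?]|[? ?]]; subst; rewrite /cross /= eqxx ?andbF in cr.
Qed.

End Beta.

Theorem mainTheorem3 (T1 T2 : finType) (e1 : rel T1) (e2 : rel T2)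
    (Dg : T1 -> T1 -> T2 -> T2 -> {set (T1 * T2)}) :
  simple_graph e1 -> connected_graph e1 ->
  simple_graph e2 -> connected_graph e2 ->
  triangulation e1 e2 Dg ->
  forall (C : T1 -> int) (D : T2 -> int),
    Prin_graph e1 C -> Prin_graph e2 D ->
    Prin_tri e1 e2 Dg (beta e1 e2 C D).
Proof.
move=> [sym1 irr1] _ [sym2 irr2] _ tri C D [f Hf] [g Hg].
exists (fun w => f w.1 + g w.2) => r; case/or3P.
- case/existsP => a /existsP[x /existsP[b /andP[hax /eqP ->]]].
  rewrite beta_horiz ?(e1_neq irr1 hax) // (Div_horiz sym1 irr1 sym2 irr2 tri) //.
  by rewrite Hg laplacian_sum.
- case/existsP => a /existsP[b /existsP[y /andP[hby /eqP ->]]].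
  rewrite beta_vert ?(e2_neq irr2 hby) // (Div_vert sym1 irr1 irr2 tri) //.
  by rewrite Hf laplacian_sum.
- case/existsP => a /existsP[x /existsP[b /existsP[y /and3P[h1 h2 /eqP ->]]]].
  have [d1 [d2 [HD cr]]] := Dg_cross irr1 irr2 tri h1 h2.
  by rewrite (Div_diag irr1 irr2 tri) // HD beta_diag.
Qed.
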